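(* Let $n\ge 2$, and suppose either $n=2$ and $p\geq 2$, or $n\geq 3$ and $p \geq \frac{2n}{n-1}$. Then \[ k_{n,p}(s) \geq \left(\frac{n-1}{n}\right)^p s^p \quad \text{for all } s \geq 0. \]
   Context: Define $\Phi:[0,\infty)\to[0,\infty)$ by $\Phi(t) = n\int_0^t (\sinh r)^{n-1}\,dr$; it is a strictly increasing diffeomorphism with $\Phi(0)=0$ and $\Phi(t)\to\infty$ as $t\to\infty$, with inverse $\Phi^{-1}$. Define $k_{n,p}(s) = \left(\sinh \Phi^{-1}(s)\right)^{p(n-1)} - s^{\frac{p(n-1)}{n}}$ for $s\geq 0$. *)

From Stdlib Require Import Reals ClassicalEpsilon.
From Coquelicot Require Import Coquelicot.
Open Scope R_scope.

(* Real power x^y for x >= 0, with the convention 0^y = 0 (used only with y > 0). *)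
Definition rpow (x y : R) : R := if Rle_dec x 0 then 0 else Rpower x y.

Definition Phi (n : nat) (t : R) : R :=
  INR n * RInt (fun r => (sinh r) ^ (n - 1)) 0 t.

(* Phi^{-1}(s): the t >= 0 with Phi t = s (Phi is a bijection [0,oo) -> [0,oo)). *)
Definition Phi_inv (n : nat) (s : R) : R :=
  epsilon (inhabits 0) (fun t => 0 <= t /\ Phi n t = s).

Definition k (n : nat) (p s : R) : R :=
  rpow (sinh (Phi_inv n s)) (p * (INR n - 1))
  - rpow s (p * (INR n - 1) / INR n).

From Stdlib Require Import Reals Lra Lia ClassicalEpsilon.
From Coquelicot Require Import Coquelicot.
Open Scope R_scope.

(* Put t = Phi^-1(s), so s = Phi(t), and c = (n-1)/n: the claim reads
   (c Phi)^p + Phi^(p(n-1)/n) <= sinh^(p(n-1)) t.  For n = 2, Phi(t) = 2u with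
   u = cosh t - 1 and sinh^2 t = u^2 + 2u, so this is the superadditivity of
   x |-> x^(p/2).  In general let a = p(n-1)/n (a >= 2 iff p >= 2n/(n-1)) and
   e = p(n-1) - n.  Both sides vanish at t = 0, and as Phi' = n sinh^(n-1) the
   derivative of their difference is p(n-1) sinh^(n-1) times
   g = sinh^e cosh - Phi^(a-1) - (c Phi)^(p-1).  Again g(0) = 0, and the bounds
   Phi <= sinh^n and c Phi <= sinh^(n-1) give
   g' >= e sinh^(e-1) (cosh^2 - 1 - sinh^2) = 0. *)

Lemma is_derive_continuous (f : R -> R) (x l : R) : is_derive f x l -> continuous f x.
Proof. intros Hf. apply (@ex_derive_continuous R_AbsRing R_NormedModule). now exists l. Qed.

Lemma le_of_derive_ge0 (F dF : R -> R) (a b : R) : a <= b ->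
  (forall x, a <= x <= b -> continuous F x) ->
  (forall x, a < x < b -> is_derive F x (dF x)) ->
  (forall x, a < x < b -> 0 <= dF x) -> F a <= F b.
Proof.
  intros Hab F_cont F_derive dF_ge0.
  (* The mean value point may be an endpoint, where [dF] is not controlled. *)
  destruct (MVT_gen F a b (fun x => Rmax 0 (dF x))) as [c [_ Hc]];
    rewrite ?Rmin_left, ?Rmax_right by lra.
  - intros x Hx. rewrite Rmax_right by (apply dF_ge0; lra). now apply F_derive.
  - intros x Hx. now apply continuity_pt_filterlim, F_cont.
  - pose proof (Rmax_l 0 (dF c)). nra.
Qed.

Lemma le_of_derive_ge0_everywhere (F dF : R -> R) (a b : R) : a <= b ->
  (forall x, is_derive F x (dF x)) ->
  (forall x, a < x < b -> 0 <= dF x) -> F a <= F b.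
Proof.
  intros Hab F_derive dF_ge0. apply (le_of_derive_ge0 F dF); auto.
  intros x _. now apply (is_derive_continuous F x (dF x)).
Qed.

Lemma cosh_sqr x : cosh x ^ 2 = 1 + sinh x ^ 2.
Proof.
  assert (exp x * exp (- x) = 1) by (rewrite <- exp_plus, Rplus_opp_r; apply exp_0).
  unfold cosh, sinh. nra.
Qed.

Lemma cosh_ge1 x : 1 <= cosh x.
Proof.
  assert (0 < cosh x) by (unfold cosh; pose proof (exp_pos x); pose proof (exp_pos (- x)); lra).
  pose proof (cosh_sqr x). nra.
Qed.

Lemma sinh_le_cosh x : sinh x <= cosh x.
Proof. unfold cosh, sinh. pose proof (exp_pos (- x)). lra. Qed.

Lemma sinh_gt0 x : 0 < x -> 0 < sinh x.
Proof. intros Hx. rewrite <- sinh_0. now apply sinh_lt. Qed.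

Lemma sinh_ge0 x : 0 <= x -> 0 <= sinh x.
Proof. intros [Hx | <-]; [apply Rlt_le, sinh_gt0, Hx | rewrite sinh_0; lra]. Qed.

Lemma is_derive_sinh x : is_derive sinh x (cosh x).
Proof. apply is_derive_Reals, derivable_pt_lim_sinh. Qed.

Lemma is_derive_cosh x : is_derive cosh x (sinh x).
Proof. apply is_derive_Reals, derivable_pt_lim_cosh. Qed.

Lemma continuous_sinh x : continuous sinh x.
Proof. exact (is_derive_continuous _ _ _ (is_derive_sinh x)). Qed.

Lemma continuous_cosh x : continuous cosh x.
Proof. exact (is_derive_continuous _ _ _ (is_derive_cosh x)). Qed.

Lemma continuous_sinh_pow m x : continuous (fun r => sinh r ^ m) x.
Proof. apply (is_derive_continuous _ _ _ (is_derive_pow sinh m x _ (is_derive_sinh x))). Qed.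

Lemma id_le_sinh x : 0 <= x -> x <= sinh x.
Proof.
  intros Hx.
  enough (sinh 0 - 0 <= sinh x - x) by (rewrite sinh_0 in *; lra).
  apply (le_of_derive_ge0_everywhere (fun r => sinh r - r) (fun r => cosh r - 1)); [lra | |].
  - intros y. apply (is_derive_minus sinh (fun r => r));
      [apply is_derive_sinh | apply (is_derive_id (K := R_AbsRing))].
  - intros y _. pose proof (cosh_ge1 y). lra.
Qed.

Lemma rpow_gt0 x e : 0 < x -> rpow x e = Rpower x e.
Proof. intros Hx. unfold rpow. destruct (Rle_dec x 0); [lra | reflexivity]. Qed.

Lemma rpow_0 e : rpow 0 e = 0.
Proof. unfold rpow. destruct (Rle_dec 0 0); [reflexivity | lra]. Qed.

Lemma rpow_ge0 x e : 0 <= rpow x e.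
Proof. unfold rpow. destruct (Rle_dec x 0); [lra | apply Rlt_le, exp_pos]. Qed.

Lemma rpow_mult_distr x y e : 0 <= x -> 0 <= y -> rpow (x * y) e = rpow x e * rpow y e.
Proof.
  intros [Hx | <-] [Hy | <-]; rewrite ?Rmult_0_l, ?Rmult_0_r, ?rpow_0; try ring.
  rewrite !rpow_gt0 by nra. symmetry. now apply Rpower_mult_distr.
Qed.

Lemma rpow_sqr x e : 0 <= x -> rpow (x ^ 2) (e / 2) = rpow x e.
Proof.
  intros [Hx | <-]; [| now rewrite pow_i, !rpow_0 by lia].
  rewrite !rpow_gt0 by nra.
  rewrite <- (Rpower_pow 2) by lra. rewrite Rpower_mult. f_equal. simpl. field.
Qed.

Lemma rpow_superadditive x y e : 0 <= x -> 0 <= y -> 1 <= e ->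
  rpow x e + rpow y e <= rpow (x + y) e.
Proof.
  intros [Hx | <-] [Hy | <-] He; rewrite ?Rplus_0_l, ?Rplus_0_r, ?rpow_0; try lra.
  rewrite !rpow_gt0 by lra.
  replace e with (1 + (e - 1)) by ring. rewrite !Rpower_plus, !Rpower_1 by lra.
  assert (Rpower x (e - 1) <= Rpower (x + y) (e - 1)) by (apply Rle_Rpower_l; lra).
  assert (Rpower y (e - 1) <= Rpower (x + y) (e - 1)) by (apply Rle_Rpower_l; lra).
  nra.
Qed.

Lemma is_derive_rpow_comp (f : R -> R) x df e : 0 < f x -> is_derive f x df ->
  is_derive (fun t => rpow (f t) e) x (e * Rpower (f x) (e - 1) * df).
Proof.
  intros Hfx Hf. rewrite Rmult_comm.
  apply (is_derive_comp (fun u => rpow u e) f); [| exact Hf].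
  apply (is_derive_ext_loc (fun u => Rpower u e)).
  - exists (mkposreal _ Hfx). intros u Hu. apply Rabs_def2 in Hu. simpl in Hu.
    symmetry. apply rpow_gt0. unfold minus, plus, opp in Hu; simpl in Hu. lra.
  - now apply is_derive_Reals, derivable_pt_lim_power.
Qed.

Lemma Rpower_le_base x e : 0 < x <= 1 -> 1 <= e -> Rpower x e <= x.
Proof.
  intros Hx He. replace e with (1 + (e - 1)) by ring. rewrite Rpower_plus, Rpower_1 by lra.
  assert (Rpower x (e - 1) <= 1).
  { replace 1 with (Rpower 1 (e - 1)) at 2 by (unfold Rpower; rewrite ln_1, Rmult_0_r; apply exp_0).
    apply Rle_Rpower_l; lra. }
  assert (0 < Rpower x (e - 1)) by apply exp_pos.
  nra.
Qed.

Lemma continuous_rpow x e : 0 <= x -> 1 <= e -> continuous (fun t => rpow t e) x.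
Proof.
  intros [Hx | <-] He.
  - apply (is_derive_continuous _ _ _ (is_derive_rpow_comp (fun t => t) x 1 e Hx
             (is_derive_id (K := R_AbsRing) x))).
  - (* for [|t| <= 1], [0 <= rpow t e <= Rmax t 0] *)
    apply continuity_pt_filterlim, continuity_pt_locally. intros eps.
    assert (Hd : 0 < Rmin 1 eps) by (apply Rmin_pos; [lra | apply cond_pos]).
    exists (mkposreal _ Hd). intros t Ht. apply Rabs_def2 in Ht. simpl in Ht.
    unfold minus, plus, opp in Ht; simpl in Ht.
    pose proof (Rmin_l 1 eps). pose proof (Rmin_r 1 eps).
    rewrite rpow_0, Rminus_0_r, Rabs_right by apply Rle_ge, rpow_ge0.
    destruct (Rle_dec t 0).
    + unfold rpow. destruct (Rle_dec t 0); [apply cond_pos | contradiction].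
    + rewrite rpow_gt0 by lra. pose proof (Rpower_le_base t e ltac:(lra) He). lra.
Qed.

Lemma continuous_rpow_comp (f : R -> R) x e : 0 <= f x -> 1 <= e -> continuous f x ->
  continuous (fun t => rpow (f t) e) x.
Proof.
  intros Hfx He Hf. apply (continuous_comp f (fun u => rpow u e)); [exact Hf |].
  now apply continuous_rpow.
Qed.

Lemma is_derive_Phi n x : is_derive (Phi n) x (INR n * sinh x ^ (n - 1)).
Proof.
  apply (is_derive_scal (fun t => RInt (fun r => sinh r ^ (n - 1)) 0 t)).
  apply (is_derive_RInt (fun r => sinh r ^ (n - 1)) _ 0); [| apply continuous_sinh_pow].
  apply filter_forall. intros b.
  apply (RInt_correct (V := R_CompleteNormedModule)), ex_RInt_continuous.
  intros; apply continuous_sinh_pow.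
Qed.

Lemma continuous_Phi n x : continuous (Phi n) x.
Proof. exact (is_derive_continuous _ _ _ (is_derive_Phi n x)). Qed.

Lemma Phi_0 n : Phi n 0 = 0.
Proof. unfold Phi. rewrite RInt_point. apply Rmult_0_r. Qed.

Lemma Phi_2 t : Phi 2 t = 2 * (cosh t - 1).
Proof.
  unfold Phi. rewrite (is_RInt_unique _ 0 t (cosh t - cosh 0)), cosh_0; [simpl; ring |].
  apply (is_RInt_derive cosh).
  - intros x _. replace (sinh x ^ (2 - 1)) with (sinh x) by (simpl; ring). apply is_derive_cosh.
  - intros x _. apply continuous_sinh_pow.
Qed.

Lemma pow_le_Phi n t : (1 <= n)%nat -> 0 <= t -> t ^ n <= Phi n t.
Proof.
  intros Hn Ht.
  enough (Phi n 0 - 0 ^ n <= Phi n t - t ^ n) by (rewrite Phi_0, pow_i in * by lia; lra).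
  apply (le_of_derive_ge0_everywhere (fun r => Phi n r - r ^ n)
           (fun r => INR n * sinh r ^ (n - 1) - INR n * 1 * r ^ pred n)); [lra | |].
  - intros x. apply (is_derive_minus (Phi n) (fun r => r ^ n)).
    + apply is_derive_Phi.
    + apply (is_derive_pow (fun r => r)), (is_derive_id (K := R_AbsRing)).
  - intros x Hx. replace (pred n) with (n - 1)%nat by lia.
    assert (x ^ (n - 1) <= sinh x ^ (n - 1))
      by (apply pow_incr; split; [lra | apply id_le_sinh; lra]).
    pose proof (pos_INR n). nra.
Qed.

Lemma Phi_le_sinh_pow n t : (1 <= n)%nat -> 0 <= t -> Phi n t <= sinh t ^ n.
Proof.
  intros Hn Ht.
  enough (sinh 0 ^ n - Phi n 0 <= sinh t ^ n - Phi n t)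
    by (rewrite sinh_0, Phi_0, pow_i in * by lia; lra).
  apply (le_of_derive_ge0_everywhere (fun r => sinh r ^ n - Phi n r)
           (fun r => INR n * cosh r * sinh r ^ pred n - INR n * sinh r ^ (n - 1))); [lra | |].
  - intros x. apply (is_derive_minus (fun r => sinh r ^ n) (Phi n)).
    + apply is_derive_pow, is_derive_sinh.
    + apply is_derive_Phi.
  - intros x Hx. replace (pred n) with (n - 1)%nat by lia.
    assert (0 <= INR n * sinh x ^ (n - 1))
      by (apply Rmult_le_pos; [apply pos_INR | apply pow_le, sinh_ge0; lra]).
    pose proof (cosh_ge1 x). nra.
Qed.

Lemma Phi_le_sinh_pow_pred n t : (2 <= n)%nat -> 0 <= t ->
  (INR n - 1) * Phi n t <= INR n * sinh t ^ (n - 1).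
Proof.
  intros Hn Ht.
  enough (INR n * sinh 0 ^ (n - 1) - (INR n - 1) * Phi n 0
          <= INR n * sinh t ^ (n - 1) - (INR n - 1) * Phi n t)
    by (rewrite sinh_0, Phi_0, pow_i in * by lia; lra).
  apply (le_of_derive_ge0_everywhere
           (fun r => INR n * sinh r ^ (n - 1) - (INR n - 1) * Phi n r)
           (fun r => INR n * (INR (n - 1) * cosh r * sinh r ^ pred (n - 1))
                     - (INR n - 1) * (INR n * sinh r ^ (n - 1)))); [lra | |].
  - intros x.
    apply (is_derive_minus (fun r => INR n * sinh r ^ (n - 1)) (fun r => (INR n - 1) * Phi n r)).
    + apply (is_derive_scal (fun r => sinh r ^ (n - 1))), is_derive_pow, is_derive_sinh.
    + apply is_derive_scal, is_derive_Phi.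
  - intros x Hx.
    (* the slope is [n (n - 1) sinh^(n-2) (cosh - sinh)] *)
    replace (sinh x ^ (n - 1)) with (sinh x * sinh x ^ pred (n - 1))
      by (rewrite tech_pow_Rmult; f_equal; lia).
    rewrite minus_INR by lia. simpl INR.
    assert (0 <= sinh x ^ pred (n - 1)) by (apply pow_le, sinh_ge0; lra).
    assert (1 <= INR n - 1) by (apply (le_INR 2) in Hn; simpl in Hn; lra).
    pose proof (sinh_le_cosh x).
    assert (0 <= INR n * (INR n - 1) * sinh x ^ pred (n - 1) * (cosh x - sinh x))
      by (repeat apply Rmult_le_pos; lra).
    nra.
Qed.

Lemma Phi_gt0 n t : (1 <= n)%nat -> 0 < t -> 0 < Phi n t.
Proof. intros Hn Ht. pose proof (pow_lt t n Ht). pose proof (pow_le_Phi n t Hn). lra. Qed.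

Lemma Phi_ge0 n t : (1 <= n)%nat -> 0 <= t -> 0 <= Phi n t.
Proof. intros Hn [Ht | <-]; [now apply Rlt_le, Phi_gt0 | rewrite Phi_0; lra]. Qed.

Lemma Phi_surjective n s : (1 <= n)%nat -> 0 <= s -> exists t, 0 <= t /\ Phi n t = s.
Proof.
  intros Hn Hs.
  assert (s + 1 <= Phi n (s + 1)).
  { pose proof (Rle_pow (s + 1) 1 n ltac:(lra) Hn). pose proof (pow_le_Phi n (s + 1) Hn).
    rewrite pow_1 in *. lra. }
  destruct (IVT_gen (Phi n) 0 (s + 1) s) as [t [Ht HPhi]].
  - intros x. apply continuity_pt_filterlim, continuous_Phi.
  - rewrite Phi_0, Rmin_left, Rmax_right; lra.
  - rewrite Rmin_left, Rmax_right in Ht by lra. exists t. split; [lra | exact HPhi].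
Qed.

Lemma Phi_inv_spec n s : (1 <= n)%nat -> 0 <= s ->
  0 <= Phi_inv n s /\ Phi n (Phi_inv n s) = s.
Proof. intros Hn Hs. unfold Phi_inv. now apply epsilon_spec, Phi_surjective. Qed.

Section PowerComparison.

Variables (n : nat) (p : R).
Hypothesis n_ge2 : (2 <= n)%nat.
Hypothesis p_large : 2 * INR n <= p * (INR n - 1).

Let N := INR n.
Let c := (N - 1) / N.
Let a := p * (N - 1) / N.
Let e := p * (N - 1) - N.

Fact N_ge2 : 2 <= N.
Proof. apply (le_INR 2) in n_ge2. simpl in n_ge2. exact n_ge2. Qed.

Fact p_ge2 : 2 <= p.
Proof. pose proof N_ge2. fold N in p_large. nra. Qed.

Fact c_gt0 : 0 < c.
Proof. pose proof N_ge2. unfold c. apply Rdiv_lt_0_compat; lra. Qed.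

Fact cN_eq : c * N = N - 1.
Proof. pose proof N_ge2. unfold c. field. lra. Qed.

Fact aN_eq : a * N = p * (N - 1).
Proof. pose proof N_ge2. unfold a. field. lra. Qed.

Fact e_ge1 : 1 <= e.
Proof. pose proof N_ge2. fold N in p_large. unfold e. lra. Qed.

Fact pred_exponents_ge1 : 1 <= a - 1 /\ 1 <= p - 1.
Proof. pose proof N_ge2. pose proof p_ge2. fold N in p_large. split; [| lra].
  apply Rmult_le_reg_r with N; [lra |]. rewrite Rmult_minus_distr_r, aN_eq. lra. Qed.

Fact pow_pred_Rpower y : 0 < y -> y ^ (n - 1) = Rpower y (N - 1).
Proof. intros Hy. rewrite <- Rpower_pow by lra. f_equal. rewrite minus_INR by lia. reflexivity. Qed.

Lemma scaled_Phi_le_sinh_pow_pred t : 0 <= t -> c * Phi n t <= sinh t ^ (n - 1).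
Proof.
  intros Ht. pose proof N_ge2 as HN. pose proof (Phi_le_sinh_pow_pred n t n_ge2 Ht) as HPhi.
  apply Rmult_le_reg_l with N; [lra |].
  rewrite <- Rmult_assoc, (Rmult_comm N c), cN_eq. exact HPhi.
Qed.

Lemma power_sum_slope_le y h S : 0 < y -> 0 < S -> h ^ 2 = 1 + y ^ 2 ->
  S <= y ^ n -> c * S <= y ^ (n - 1) ->
  (a - 1) * Rpower S (a - 2) * (N * y ^ (n - 1))
  + (p - 1) * Rpower (c * S) (p - 2) * (c * (N * y ^ (n - 1)))
  <= e * Rpower y (e - 1) * h * h + Rpower y e * y.
Proof.
  intros Hy HS Hh HSy HcSy.
  pose proof N_ge2. pose proof p_ge2. pose proof c_gt0. pose proof e_ge1.
  pose proof pred_exponents_ge1 as [Ha _].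
  assert (Yn : y ^ n = Rpower y N) by (symmetry; now apply Rpower_pow).
  rewrite Yn in HSy. rewrite pow_pred_Rpower in HcSy |- * by lra.
  (* [S <= y^N] and [c S <= y^(N-1)] turn both terms on the left into powers of [y],
     with exponents [e - 1] and [e + 1] because [e = (a - 1) N = (p - 1) (N - 1) - 1]. *)
  assert (BS : Rpower S (a - 2) * Rpower y (N - 1) <= Rpower y (e - 1)).
  { replace (e - 1) with (N * (a - 2) + (N - 1))
      by (unfold e; rewrite <- aN_eq; ring).
    rewrite Rpower_plus, <- Rpower_mult.
    apply Rmult_le_compat_r; [apply Rlt_le, exp_pos |].
    apply Rle_Rpower_l; lra. }
  assert (BcS : Rpower (c * S) (p - 2) * Rpower y (N - 1) <= Rpower y (e + 1)).
  { replace (e + 1) with ((N - 1) * (p - 2) + (N - 1)) by (unfold e; ring).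
    rewrite Rpower_plus, <- Rpower_mult.
    apply Rmult_le_compat_r; [apply Rlt_le, exp_pos |].
    apply Rle_Rpower_l; [lra | split; [nra | exact HcSy]]. }
  assert (Ye1 : Rpower y (e + 1) = Rpower y (e - 1) * y ^ 2).
  { rewrite <- (Rpower_pow 2), <- Rpower_plus by lra. f_equal. simpl. ring. }
  assert (Ye : Rpower y e * y = Rpower y (e + 1)) by (rewrite Rpower_plus, Rpower_1; lra).
  assert (Ea : (a - 1) * N = e) by (unfold e; rewrite <- aN_eq; ring).
  assert (Ep : (p - 1) * (c * N) = e + 1) by (rewrite cN_eq; unfold e; ring).
  apply Rle_trans with (e * Rpower y (e - 1) + (e + 1) * Rpower y (e + 1)).
  - replace ((a - 1) * Rpower S (a - 2) * (N * Rpower y (N - 1))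
             + (p - 1) * Rpower (c * S) (p - 2) * (c * (N * Rpower y (N - 1))))
      with (e * (Rpower S (a - 2) * Rpower y (N - 1))
            + (e + 1) * (Rpower (c * S) (p - 2) * Rpower y (N - 1)))
      by (rewrite <- Ep, <- Ea; ring).
    apply Rplus_le_compat; apply Rmult_le_compat_l; lra.
  - right. rewrite Ye, Ye1.
    replace (e * Rpower y (e - 1) * h * h) with (e * Rpower y (e - 1) * h ^ 2) by ring.
    rewrite Hh. ring.
Qed.

Lemma power_sum_slope_factor y h S : 0 < y ->
  p * (N - 1) * Rpower y (p * (N - 1) - 1) * h
  - a * Rpower S (a - 1) * (N * y ^ (n - 1))
  - p * Rpower (c * S) (p - 1) * (c * (N * y ^ (n - 1)))
  = p * (N - 1) * y ^ (n - 1) * (Rpower y e * h - Rpower S (a - 1) - Rpower (c * S) (p - 1)).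
Proof.
  intros Hy. pose proof N_ge2.
  rewrite pow_pred_Rpower by exact Hy.
  replace (p * (N - 1) - 1) with (e + (N - 1)) by (unfold e; ring).
  rewrite Rpower_plus. unfold a, c. field. lra.
Qed.

Lemma Phi_power_sum_pred_le t : 0 <= t ->
  rpow (Phi n t) (a - 1) + rpow (c * Phi n t) (p - 1) <= rpow (sinh t) e * cosh t.
Proof.
  intros Ht. pose proof c_gt0. pose proof e_ge1. pose proof pred_exponents_ge1 as [Ha Hp].
  set (g r := rpow (sinh r) e * cosh r - rpow (Phi n r) (a - 1) - rpow (c * Phi n r) (p - 1)).
  enough (g 0 <= g t)
    by (unfold g in *; rewrite sinh_0, Phi_0, Rmult_0_r, !rpow_0 in *; lra).
  apply (le_of_derive_ge0 g
    (fun r => e * Rpower (sinh r) (e - 1) * cosh r * cosh r + rpow (sinh r) e * sinh r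
              - (a - 1) * Rpower (Phi n r) (a - 1 - 1) * (N * sinh r ^ (n - 1))
              - (p - 1) * Rpower (c * Phi n r) (p - 1 - 1) * (c * (N * sinh r ^ (n - 1)))));
    [exact Ht | intros x Hx | intros x Hx | intros x Hx].
  - assert (0 <= sinh x) by (apply sinh_ge0; lra).
    assert (0 <= Phi n x) by (apply Phi_ge0; lia || lra).
    apply (continuous_minus (fun r => rpow (sinh r) e * cosh r - rpow (Phi n r) (a - 1))
                            (fun r => rpow (c * Phi n r) (p - 1))).
    apply (continuous_minus (fun r => rpow (sinh r) e * cosh r) (fun r => rpow (Phi n r) (a - 1))).
    + apply (continuous_mult (fun r => rpow (sinh r) e) cosh).
      * apply continuous_rpow_comp; [lra | lra | apply continuous_sinh].
      * apply continuous_cosh.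
    + apply continuous_rpow_comp; [lra | lra | apply continuous_Phi].
    + apply continuous_rpow_comp; [nra | lra |].
      apply (continuous_mult (fun _ => c) (Phi n)); [apply continuous_const | apply continuous_Phi].
  - assert (0 < sinh x) by (apply sinh_gt0; lra).
    assert (0 < Phi n x) by (apply Phi_gt0; lia || lra).
    apply (is_derive_minus (fun r => rpow (sinh r) e * cosh r - rpow (Phi n r) (a - 1))
                           (fun r => rpow (c * Phi n r) (p - 1))).
    apply (is_derive_minus (fun r => rpow (sinh r) e * cosh r) (fun r => rpow (Phi n r) (a - 1))).
    + apply (is_derive_mult (fun r => rpow (sinh r) e) cosh);
        [| apply is_derive_cosh | apply Rmult_comm].
      apply (is_derive_rpow_comp sinh); [lra | apply is_derive_sinh].
    + apply (is_derive_rpow_comp (Phi n)); [lra | apply is_derive_Phi].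
    + apply (is_derive_rpow_comp (fun r => c * Phi n r)); [nra |].
      apply is_derive_scal, is_derive_Phi.
  - assert (0 < sinh x) by (apply sinh_gt0; lra).
    assert (0 < Phi n x) by (apply Phi_gt0; lia || lra).
    rewrite rpow_gt0 by lra.
    replace (a - 1 - 1) with (a - 2) by ring. replace (p - 1 - 1) with (p - 2) by ring.
    pose proof (power_sum_slope_le (sinh x) (cosh x) (Phi n x) ltac:(lra) ltac:(lra)
                  (cosh_sqr x) (Phi_le_sinh_pow n x ltac:(lia) ltac:(lra))
                  (scaled_Phi_le_sinh_pow_pred x ltac:(lra))).
    lra.
Qed.

Lemma Phi_power_sum_le t : 0 <= t ->
  rpow ((INR n - 1) / INR n * Phi n t) p + rpow (Phi n t) (p * (INR n - 1) / INR n)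
  <= rpow (sinh t) (p * (INR n - 1)).
Proof.
  intros Ht. fold N. fold c a.
  pose proof N_ge2. pose proof p_ge2. pose proof c_gt0. pose proof pred_exponents_ge1 as [Ha _].
  set (G r := rpow (sinh r) (p * (N - 1)) - rpow (Phi n r) a - rpow (c * Phi n r) p).
  enough (G 0 <= G t)
    by (unfold G in *; rewrite sinh_0, Phi_0, Rmult_0_r, !rpow_0 in *; lra).
  apply (le_of_derive_ge0 G
    (fun r => p * (N - 1) * Rpower (sinh r) (p * (N - 1) - 1) * cosh r
              - a * Rpower (Phi n r) (a - 1) * (N * sinh r ^ (n - 1))
              - p * Rpower (c * Phi n r) (p - 1) * (c * (N * sinh r ^ (n - 1)))));
    [exact Ht | intros x Hx | intros x Hx | intros x Hx].
  - assert (0 <= sinh x) by (apply sinh_ge0; lra).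
    assert (0 <= Phi n x) by (apply Phi_ge0; lia || lra).
    apply (continuous_minus (fun r => rpow (sinh r) (p * (N - 1)) - rpow (Phi n r) a)
                            (fun r => rpow (c * Phi n r) p)).
    apply (continuous_minus (fun r => rpow (sinh r) (p * (N - 1))) (fun r => rpow (Phi n r) a)).
    + apply continuous_rpow_comp; [lra | nra | apply continuous_sinh].
    + apply continuous_rpow_comp; [lra | lra | apply continuous_Phi].
    + apply continuous_rpow_comp; [nra | lra |].
      apply (continuous_mult (fun _ => c) (Phi n)); [apply continuous_const | apply continuous_Phi].
  - assert (0 < sinh x) by (apply sinh_gt0; lra).
    assert (0 < Phi n x) by (apply Phi_gt0; lia || lra).
    apply (is_derive_minus (fun r => rpow (sinh r) (p * (N - 1)) - rpow (Phi n r) a)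
                           (fun r => rpow (c * Phi n r) p)).
    apply (is_derive_minus (fun r => rpow (sinh r) (p * (N - 1))) (fun r => rpow (Phi n r) a)).
    + apply (is_derive_rpow_comp sinh); [lra | apply is_derive_sinh].
    + apply (is_derive_rpow_comp (Phi n)); [lra | apply is_derive_Phi].
    + apply (is_derive_rpow_comp (fun r => c * Phi n r)); [nra |].
      apply is_derive_scal, is_derive_Phi.
  - assert (0 < sinh x) by (apply sinh_gt0; lra).
    assert (0 < Phi n x) by (apply Phi_gt0; lia || lra).
    pose proof (Phi_power_sum_pred_le x ltac:(lra)) as inner.
    rewrite !rpow_gt0 in inner by nra.
    rewrite power_sum_slope_factor by lra.
    apply Rmult_le_pos; [| lra].
    repeat apply Rmult_le_pos; try lra. apply pow_le; lra.
Qed.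
End PowerComparison.

Lemma Phi_power_sum_le_2 p t : 2 <= p -> 0 <= t ->
  rpow (Phi 2 t / 2) p + rpow (Phi 2 t) (p / 2) <= rpow (sinh t) p.
Proof.
  intros Hp Ht. rewrite Phi_2.
  set (u := cosh t - 1).
  assert (u_ge0 : 0 <= u) by (pose proof (cosh_ge1 t); unfold u; lra).
  assert (sinh_sqr : sinh t ^ 2 = u ^ 2 + 2 * u) by (pose proof (cosh_sqr t); unfold u; nra).
  replace (2 * u / 2) with u by field.
  rewrite <- (rpow_sqr u p u_ge0), <- (rpow_sqr (sinh t) p (sinh_ge0 t Ht)), sinh_sqr.
  apply rpow_superadditive; nra.
Qed.

Theorem lemma2p1 (n : nat) (p : R) :
  (2 <= n)%nat ->
  ((n = 2%nat /\ 2 <= p) \/ ((3 <= n)%nat /\ 2 * INR n / (INR n - 1) <= p)) ->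
  forall s : R, 0 <= s ->
    k n p s >= rpow ((INR n - 1) / INR n) p * rpow s p.
Proof.
  intros Hn Hcase s Hs.
  destruct (Phi_inv_spec n s ltac:(lia) Hs) as [Ht HPhi].
  unfold k. set (t := Phi_inv n s) in *. rewrite <- HPhi.
  assert (c_ge0 : 0 <= (INR n - 1) / INR n)
    by (apply (le_INR 2) in Hn; simpl in Hn; apply Rdiv_le_0_compat; lra).
  rewrite <- (rpow_mult_distr _ _ p c_ge0 (Phi_ge0 n t ltac:(lia) Ht)).
  destruct Hcase as [[-> Hp] | [Hn3 Hp]].
  - pose proof (Phi_power_sum_le_2 p t Hp Ht).
    replace (INR 2) with 2 by (simpl; ring).
    replace (p * (2 - 1)) with p by ring. replace (p * (2 - 1) / 2) with (p / 2) by field.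
    replace ((2 - 1) / 2 * Phi 2 t) with (Phi 2 t / 2) by field.
    lra.
  - assert (p_large : 2 * INR n <= p * (INR n - 1)).
    { assert (3 <= INR n) by (apply (le_INR 3) in Hn3; simpl in Hn3; lra).
      apply Rmult_le_compat_r with (r := INR n - 1) in Hp; [| lra].
      replace (2 * INR n / (INR n - 1) * (INR n - 1)) with (2 * INR n) in Hp by (field; lra).
      exact Hp. }
    pose proof (Phi_power_sum_le n p Hn p_large t Ht). lra.
Qed.
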